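(* Let $\Delta: M_n\to M_n$ be a weak-2-local derivation, let $p_1,\ldots,p_n$ be mutually orthogonal minimal projections in $M_n$, and for $i,j\in\{1,\ldots,n\}$ let $e_{ij}$ be the unique minimal partial isometry in $M_n$ with $e_{ij}^*e_{ij}=p_j$ and $e_{ij}e_{ij}^*=p_i$. Then there exists $w_0\in M_n$ such that $\Delta\left(\sum_{k=1}^n\lambda_kp_k\right)=\left[w_0,\sum_{k=1}^n\lambda_kp_k\right]$ for all $\lambda_1,\ldots,\lambda_n\in\mathbb{C}$, and $\Delta(e_{1j})=[w_0,e_{1j}]$ for all $2\le j\le n$.
   Context: $M_n=M_n(\mathbb{C})$ and $[x,y]=xy-yx$. A derivation on a C$^*$-algebra $A$ is a linear map $D:A\to A$ with $D(ab)=D(a)b+aD(b)$. A (not necessarily linear) map $\Delta:A\to A$ is a weak-2-local derivation if for every $a,b\in A$ and every $\phi\in A^*$ there exists a derivation $D_{a,b,\phi}:A\to A$ such that $\phi\Delta(a)=\phi D_{a,b,\phi}(a)$ and $\phi\Delta(b)=\phi D_{a,b,\phi}(b)$. *)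

(* The complex numbers are modelled as R[i] = complex R for an
   arbitrary R : realType (mathcomp-real-closed's complex construction). *)
From HB Require Import structures.
From mathcomp Require Import all_boot all_order all_algebra.
From mathcomp Require Import complex.
From mathcomp Require Import reals.
Set Implicit Arguments. Unset Strict Implicit. Unset Printing Implicit Defensive.
Import Order.TTheory GRing.Theory Num.Theory.
Local Open Scope ring_scope.

Section Defs.
Variable (C : numClosedFieldType) (n : nat).
Local Notation M := 'M[C]_n.

Definition adjmx (a : M) : M := (map_mx Num.conj a)^T.

Definition commr (x y : M) : M := x * y - y * x.

Definition is_derivation (D : M -> M) : Prop :=
  (forall (c : C) (x y : M), D (c *: x + y) = c *: D x + D y) /\
  (forall x y : M, D (x * y) = D x * y + x * D y).

(* an element of the dual space M_n^*: a linear functional (M_n is finite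
   dimensional, so every linear functional is bounded) *)
Definition is_functional (phi : M -> C) : Prop :=
  forall (c : C) (x y : M), phi (c *: x + y) = c * phi x + phi y.

Definition weak_2_local_derivation (Delta : M -> M) : Prop :=
  forall (a b : M) (phi : M -> C), is_functional phi ->
    exists D : M -> M, is_derivation D /\
      phi (Delta a) = phi (D a) /\ phi (Delta b) = phi (D b).

Definition is_projection (p : M) : Prop := adjmx p = p /\ p * p = p.

Definition minimal_projection (p : M) : Prop :=
  is_projection p /\ p != 0 /\
  forall q : M, is_projection q -> q * p = q -> q = 0 \/ q = p.

End Defs.

From HB Require Import structures.
From mathcomp Require Import all_boot all_order all_algebra.
From mathcomp Require Import complex.
From mathcomp Require Import reals.
Import Order.TTheory GRing.Theory Num.Theory.
Set Implicit Arguments. Unset Strict Implicit. Unset Printing Implicit Defensive.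
Local Open Scope ring_scope.

(* For matrices [L], [R] every entry of [L * x * R] is a linear functional of
   [x], so a weak-2-local derivation satisfies every identity between a corner
   [L * D a * R] and a multiple of [L * D b * R] that holds for all derivations
   [D].  For a derivation and [r != s], the [(r, s)] corner of
   [D (\sum_k lam k *: p k)] is [(lam s - lam r)] times that of [D (p s)];
   comparing with [\sum_k k *: p k] forces the off-diagonal corners of [w0].
   Using [e^* e = p j] and [e e^* = p 0], the corners of [Delta (e 0 j)] are
   then expressed through those of [Delta (p 0)] and [Delta (p j)], and they fix
   the diagonal corners of [w0].  Finally [n] nonzero orthogonal idempotents of
   [M_n] sum to [1], so a matrix is determined by its corners
   [p r * x * p s]. *)

Section Adjoint.
Variables (C : numClosedFieldType) (n : nat).
Local Notation M := 'M[C]_n.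

Lemma adjmxM (a b : M) : adjmx (a * b) = adjmx b * adjmx a.
Proof. by rewrite /adjmx -!mulmxE map_mxM trmx_mul. Qed.

Lemma adjmxB (a b : M) : adjmx (a - b) = adjmx a - adjmx b.
Proof. by apply/matrixP => i j; rewrite /adjmx !mxE rmorphB. Qed.

Lemma adjmxK (a : M) : adjmx (adjmx a) = a.
Proof. by apply/matrixP => i j; rewrite /adjmx !mxE conjCK. Qed.

(* The diagonal entries of [a^* a] are the squared column norms of [a]. *)
Lemma adjmx_mul_eq0 (a : M) : adjmx a * a = 0 -> a = 0.
Proof.
move=> a0; apply/matrixP => k i; rewrite mxE.
have col0 : \sum_t `|a t i| ^+ 2 = 0.
  have := congr1 (fun x : M => x i i) a0; rewrite -mulmxE !mxE => sum0.
  rewrite -[RHS]sum0; apply: eq_bigr => t _.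
  by rewrite /adjmx !mxE normCK mulrC.
have sq_ge0 u : predT u -> 0 <= `|a u i| ^+ 2 by move=> _; rewrite exprn_ge0.
have /eqP := psumr_eq0P (P := predT) sq_ge0 col0 (i := k) isT.
by rewrite sqrf_eq0 normr_eq0 => /eqP.
Qed.

Lemma partial_isometry_range (e p q : M) :
  is_projection p -> q * q = q -> adjmx e * e = q -> e * adjmx e = p ->
  p * e = e.
Proof.
move=> [adjp pp] qq ee ee'.
apply/eqP; rewrite -subr_eq0; apply/eqP/adjmx_mul_eq0.
have epe : adjmx e * p * e = q by rewrite -ee' !mulrA ee -mulrA ee qq.
rewrite adjmxB adjmxM adjp mulrBr !mulrBl !mulrA -(mulrA (adjmx e)) pp epe ee.
by rewrite !subrr.
Qed.

Lemma partial_isometry_source (e p q : M) :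
  is_projection p -> is_projection q -> adjmx e * e = q -> e * adjmx e = p ->
  e * q = e.
Proof.
move=> [adjp pp] [adjq qq] ee ee'.
have qe : q * adjmx e = adjmx e.
  by apply: (partial_isometry_range (conj adjq qq) pp); rewrite adjmxK.
by rewrite -[LHS]adjmxK adjmxM adjq qe adjmxK.
Qed.

End Adjoint.

Section Derivation.
Variables (C : numClosedFieldType) (n : nat) (D : 'M[C]_n -> 'M[C]_n).
Hypothesis HD : is_derivation D.
Local Notation M := 'M[C]_n.

Lemma derivationD x y : D (x + y) = D x + D y.
Proof. by case: HD => lin _; rewrite -[x]scale1r lin !scale1r. Qed.

Lemma derivation0 : D 0 = 0.
Proof. by apply: (@addrI _ (D 0)); rewrite -derivationD !addr0. Qed.

Lemma derivationZ c x : D (c *: x) = c *: D x.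
Proof. by case: HD => lin _; rewrite -[c *: x]addr0 lin derivation0 addr0. Qed.

Lemma derivationM x y : D (x * y) = D x * y + x * D y.
Proof. by case: HD. Qed.

Lemma derivation_sum (I : finType) (F : I -> M) :
  D (\sum_i F i) = \sum_i D (F i).
Proof. exact: (big_morph D derivationD derivation0). Qed.

Lemma derivation_idem_corner (p : M) : p * p = p -> p * D p * p = 0.
Proof.
move=> pp; have dp : D p = D p * p + p * D p by rewrite -{1}pp derivationM.
apply: (@addIr _ (p * D p * p)); rewrite add0r {3}dp mulrDr mulrDl.
by rewrite -!mulrA pp !mulrA pp.
Qed.

Lemma derivation_orth_corner (p q q' : M) :
  p * p = p -> q * p = 0 -> p * q' = 0 -> q * D p * q' = 0.
Proof.
move=> pp qp pq'; rewrite -{1}pp derivationM mulrDr mulrDl -!mulrA pq' !mulr0.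
by rewrite add0r !mulrA qp !mul0r.
Qed.

Lemma derivation_orth_cross (p q : M) :
  p * p = p -> q * q = q -> p * q = 0 -> p * D p * q = - (p * D q * q).
Proof.
move=> pp qq pq; apply/eqP; rewrite -subr_eq0 opprK.
have /(congr1 (fun x => p * x * q)) := congr1 D pq.
rewrite derivation0 derivationM mulr0 mul0r mulrDr mulrDl -!mulrA qq !mulrA pp.
by move=> ->.
Qed.

End Derivation.

Lemma commr_sandwich (C : numClosedFieldType) (n : nat) (a b x y : 'M[C]_n) :
  a * commr x y * b = a * x * (y * b) - a * y * (x * b).
Proof. by rewrite /commr mulrBr mulrBl !mulrA. Qed.

Section OrthogonalIdempotents.
Variables (C : numClosedFieldType) (n : nat) (p : 'I_n.+1 -> 'M[C]_n.+1).
Hypothesis pp : forall k, p k * p k = p k.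
Hypothesis po : forall k l, k != l -> p k * p l = 0.
Local Notation M := 'M[C]_n.+1.

Lemma orth_idem_mul r k : p r * p k = if r == k then p r else 0.
Proof. by case: eqVneq => [->|rk]; [rewrite pp | rewrite po]. Qed.

Lemma orth_idem_mul_comb (lam : 'I_n.+1 -> C) r :
  p r * (\sum_k lam k *: p k) = lam r *: p r.
Proof.
rewrite mulr_sumr (bigD1 r) //= big1 ?addr0; first by rewrite -scalerAr pp.
by move=> k kr; rewrite -scalerAr po ?scaler0 // eq_sym.
Qed.

Lemma orth_comb_mul_idem (lam : 'I_n.+1 -> C) s :
  (\sum_k lam k *: p k) * p s = lam s *: p s.
Proof.
rewrite mulr_suml (bigD1 s) //= big1 ?addr0; first by rewrite -scalerAl pp.
by move=> k ks; rewrite -scalerAl po ?scaler0.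
Qed.

Definition corner_sum (B : 'I_n.+1 -> 'I_n.+1 -> M) : M :=
  \sum_r \sum_s p r * B r s * p s.

Lemma corner_sumE B r s : p r * corner_sum B * p s = p r * B r s * p s.
Proof.
rewrite mulr_sumr mulr_suml (bigD1 r) //= [X in _ + X]big1 ?addr0.
  rewrite mulr_sumr mulr_suml (bigD1 s) //= [X in _ + X]big1 ?addr0.
    by rewrite !mulrA pp -!mulrA pp.
  by move=> s' ss'; rewrite !mulrA -(mulrA _ (p s')) (po ss') mulr0.
move=> r' rr'; rewrite mulr_sumr mulr_suml big1 // => s' _.
by rewrite !mulrA orth_idem_mul eq_sym (negbTE rr') !mul0r.
Qed.

Lemma derivation_comb_corner (D : M -> M) (lam : 'I_n.+1 -> C) r s :
  is_derivation D ->
  p r * D (\sum_k lam k *: p k) * p s =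
  if r == s then 0 else (lam s - lam r) *: (p r * D (p s) * p s).
Proof.
move=> HD; rewrite derivation_sum // mulr_sumr mulr_suml.
under eq_bigr => k _ do rewrite derivationZ // -scalerAr -scalerAl.
case: eqVneq => [<-|rs].
  apply: big1 => k _; case: (eqVneq k r) => [->|kr].
    by rewrite (derivation_idem_corner HD (pp r)) scaler0.
  have rk : r != k by rewrite eq_sym.
  by rewrite (derivation_orth_corner HD (pp k) (po rk) (po kr)) scaler0.
rewrite (bigD1 s) //= (bigD1 r) //= [X in _ + (_ + X)]big1 ?addr0.
  rewrite (derivation_orth_cross HD (pp r) (pp s) (po rs)).
  by rewrite scalerN scalerBl addrC.
move=> k /andP[ks kr]; have rk : r != k by rewrite eq_sym.
by rewrite (derivation_orth_corner HD (pp k) (po rk) (po ks)) scaler0.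
Qed.

Hypothesis p_neq0 : forall k, p k != 0.

(* A nonzero row chosen in each [p k] gives [n.+1] linearly independent rows,
   all annihilated by [1 - \sum_k p k]. *)
Lemma sum_orth_idem_eq1 : \sum_k p k = 1.
Proof.
set P := \sum_k p k.
have pQ l : p l * (1 - P) = 0.
  rewrite mulrBr mulr1 /P mulr_sumr (bigD1 l) //= pp big1 ?addr0 ?subrr //.
  by move=> k kl; apply: po; rewrite eq_sym.
pose ik k := odflt ord0 [pick i | row i (p k) != 0].
have ikP k : row (ik k) (p k) != 0.
  rewrite /ik; case: pickP => [i //|no_row] /=; exfalso.
  move/negP: (p_neq0 k); apply; apply/eqP/row_matrixP => i; rewrite row0.
  by move: (no_row i) => /negbFE/eqP.
pose V := \matrix_(k, c) p k (ik k) c.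
have rowV k : row k V = row (ik k) (p k) by apply/rowP => c; rewrite !mxE.
have VQ : V *m (1 - P) = 0.
  by apply/row_matrixP => k; rewrite row_mul rowV -row_mul mulmxE pQ !row0.
have Vu : V \in unitmx.
  rewrite -row_free_unit -kermx_eq0; apply/eqP/row_matrixP => a; rewrite row0.
  set x := row a (kermx V).
  have xV : x *m V = 0 by rewrite -row_mul mulmx_ker row0.
  apply/rowP => l; rewrite [RHS]mxE.
  have : (x *m V) *m p l = x 0 l *: row (ik l) (p l).
    rewrite (mulmx_sum_row x V) mulmx_suml (bigD1 l) //= big1 ?addr0.
      by rewrite -scalemxAl rowV -row_mul mulmxE pp.
    by move=> k kl; rewrite -scalemxAl rowV -row_mul mulmxE po // row0 scaler0.
  rewrite xV mul0mx => /esym/eqP; rewrite scaler_eq0 (negbTE (ikP l)) orbF.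
  by move/eqP.
have : 1 - P = 0 by rewrite -(mulKmx Vu (1 - P)) VQ mulmx0.
by move/subr0_eq/esym.
Qed.

Lemma eq_corners (X Y : M) :
  (forall r s, p r * X * p s = p r * Y * p s) -> X = Y.
Proof.
have split_corners (Z : M) : Z = \sum_r \sum_s p r * Z * p s.
  under eq_bigr => r _ do rewrite -mulr_sumr sum_orth_idem_eq1 mulr1.
  by rewrite -mulr_suml sum_orth_idem_eq1 mul1r.
move=> XY; rewrite (split_corners X) (split_corners Y).
by apply: eq_bigr => r _; apply: eq_bigr => s _; apply: XY.
Qed.

End OrthogonalIdempotents.

Section WeakLocal.
Variables (C : numClosedFieldType) (n : nat) (Delta : 'M[C]_n.+1 -> 'M[C]_n.+1).
Hypothesis W : weak_2_local_derivation Delta.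
Local Notation M := 'M[C]_n.+1.

Lemma weak_2_local_corner (L R a b : M) (c : C) :
  (forall D, is_derivation D -> L * D a * R = c *: (L * D b * R)) ->
  L * Delta a * R = c *: (L * Delta b * R).
Proof.
move=> DLR; apply/matrixP => t v.
have phi_lin : is_functional (fun x : M => (L * x * R) t v).
  by move=> c' x y; rewrite mulrDr mulrDl -scalerAr -scalerAl !mxE.
have [D [HD [Da Db]]] := W a b phi_lin.
by rewrite /= in Da Db; rewrite [RHS]mxE Da Db DLR // mxE.
Qed.

Lemma weak_2_local_orth_corner (p q q' : M) :
  p * p = p -> q * p = 0 -> p * q' = 0 -> q * Delta p * q' = 0.
Proof.
move=> pp qp pq'; rewrite (@weak_2_local_corner _ _ _ p 0) ?scale0r // => D HD.
by rewrite scale0r (derivation_orth_corner HD pp qp pq').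
Qed.

Variable p : 'I_n.+1 -> M.
Hypothesis pp : forall k, p k * p k = p k.
Hypothesis po : forall k l, k != l -> p k * p l = 0.

Lemma weak_2_local_comb_diag_corner (lam : 'I_n.+1 -> C) r :
  p r * Delta (\sum_k lam k *: p k) * p r = 0.
Proof.
rewrite (@weak_2_local_corner _ _ _ 0 0) ?scale0r // => D HD.
by rewrite (derivation_comb_corner pp po) // eqxx scale0r.
Qed.

Lemma weak_2_local_comb_corner (lam mu : 'I_n.+1 -> C) r s : mu r != mu s ->
  p r * Delta (\sum_k lam k *: p k) * p s =
  ((lam s - lam r) / (mu s - mu r)) *: (p r * Delta (\sum_k mu k *: p k) * p s).
Proof.
move=> mu_rs; have rs : r != s by apply: contraNneq mu_rs => ->.
apply: weak_2_local_corner => D HD.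
rewrite !(derivation_comb_corner pp po) // (negbTE rs) scalerA divfK //.
by rewrite subr_eq0 eq_sym.
Qed.

Section PartialIsometry.
Hypothesis adjp : forall k, adjmx (p k) = p k.
Variables (i j : 'I_n.+1) (e : M).
Hypotheses (ij : i != j) (ee : adjmx e * e = p j) (ee' : e * adjmx e = p i).

Let proj k : is_projection (p k). Proof. by []. Qed.
Let pie : p i * e = e.
Proof. exact: partial_isometry_range (proj i) (pp j) ee ee'. Qed.
Let epj : e * p j = e.
Proof. exact: partial_isometry_source (proj i) (proj j) ee ee'. Qed.
Let eadj_pi : adjmx e * p i = adjmx e. Proof. by rewrite -{2}pie adjmxM adjp. Qed.
Let pj_eadj : p j * adjmx e = adjmx e. Proof. by rewrite -{2}epj adjmxM adjp. Qed.

Lemma weak_2_local_isometry_corner0 r s : r != i -> s != j ->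
  p r * Delta e * p s = 0.
Proof.
move=> ri sj; rewrite (@weak_2_local_corner _ _ _ e 0) ?scale0r // => D HD.
have js : j != s by rewrite eq_sym.
rewrite scale0r -{1}pie derivationM // mulrDr mulrDl -!mulrA -{1}epj -(mulrA e).
by rewrite (po js) !mulr0 add0r !mulrA (po ri) !mul0r.
Qed.

(* [p j + e^*] kills the unwanted corners on both sides of the comparison. *)
Lemma weak_2_local_isometry_corner_range s : s != j ->
  p i * Delta e * p s = e * (p j * Delta (p j) * p s).
Proof.
move=> sj; have js : j != s by rewrite eq_sym.
have ji : j != i by rewrite eq_sym.
have key :
    (p j + adjmx e) * Delta e * p s = (p j + adjmx e) * Delta (p j) * p s.
  rewrite -[RHS]scale1r; apply: weak_2_local_corner => D HD.
  rewrite scale1r !mulrDl.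
  have pj_De : p j * D e * p s = 0.
    rewrite -{1}pie derivationM // mulrDr mulrDl !mulrA (po ji) !mul0r addr0.
    by rewrite -mulrA -{1}epj -(mulrA e) (po js) !mulr0.
  have eadj_De : adjmx e * D e * p s = p j * D (p j) * p s.
    rewrite -{2}epj derivationM // mulrDr mulrDl -!mulrA (po js) !mulr0 add0r.
    by rewrite !mulrA ee.
  have eadj_Dpj : adjmx e * D (p j) * p s = 0.
    rewrite -eadj_pi -!mulrA (mulrA (p i)).
    by rewrite (derivation_orth_corner HD (pp j) (po ij) (po js)) mulr0.
  by rewrite pj_De eadj_De eadj_Dpj add0r addr0.
have eadj_Deltapj : adjmx e * Delta (p j) * p s = 0.
  rewrite -eadj_pi -!mulrA (mulrA (p i)).
  by rewrite (weak_2_local_orth_corner (pp j) (po ij) (po js)) mulr0.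
rewrite !mulrDl (weak_2_local_isometry_corner0 ji sj) eadj_Deltapj in key.
rewrite add0r addr0 in key.
by rewrite -key !mulrA ee'.
Qed.

Lemma weak_2_local_isometry_corner_source r : r != i ->
  p r * Delta e * p j = p r * Delta (p i) * p i * e.
Proof.
move=> ri; have ji : j != i by rewrite eq_sym.
have key :
    p r * Delta e * (p i + adjmx e) = p r * Delta (p i) * (p i + adjmx e).
  rewrite -[RHS]scale1r; apply: weak_2_local_corner => D HD.
  rewrite scale1r !mulrDr.
  have De_pi : p r * D e * p i = 0.
    rewrite -{1}epj derivationM // mulrDr mulrDl -!mulrA (po ji) !mulr0 add0r.
    by rewrite -{1}pie !mulrA (po ri) !mul0r.
  have De_eadj : p r * D e * adjmx e = p r * D (p i) * p i.
    rewrite -{1}pie derivationM // mulrDr mulrDl !mulrA (po ri) !mul0r addr0.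
    by rewrite -mulrA ee'.
  have Dpi_eadj : p r * D (p i) * adjmx e = 0.
    rewrite -pj_eadj mulrA.
    by rewrite (derivation_orth_corner HD (pp i) (po ri) (po ij)) mul0r.
  by rewrite De_pi De_eadj Dpi_eadj add0r addr0.
have Deltapi_eadj : p r * Delta (p i) * adjmx e = 0.
  by rewrite -pj_eadj mulrA (weak_2_local_orth_corner (pp i) (po ri) (po ij)) mul0r.
rewrite !mulrDr (weak_2_local_isometry_corner0 ri ij) Deltapi_eadj in key.
rewrite add0r addr0 in key.
by rewrite -ee mulrA -key -!mulrA ee.
Qed.

End PartialIsometry.

End WeakLocal.

Section ImplementingElement.
Variables (C : numClosedFieldType) (n : nat) (Delta : 'M[C]_n.+1 -> 'M[C]_n.+1).
Hypothesis W : weak_2_local_derivation Delta.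
Local Notation M := 'M[C]_n.+1.
Variable p : 'I_n.+1 -> M.
Hypothesis pp : forall k, p k * p k = p k.
Hypothesis po : forall k l, k != l -> p k * p l = 0.
Hypothesis adjp : forall k, adjmx (p k) = p k.
Hypothesis p_neq0 : forall k, p k != 0.
Variable e : 'I_n.+1 -> M.
Hypothesis ee : forall j, j != ord0 -> adjmx (e j) * e j = p j.
Hypothesis ee' : forall j, j != ord0 -> e j * adjmx (e j) = p ord0.

Let mu (k : 'I_n.+1) : C := k%:R.

Let mu_neq r s : r != s -> mu r != mu s.
Proof. by apply: contra; rewrite /mu eqr_nat. Qed.

(* Off-diagonal blocks are forced by [Delta (\sum_k mu k *: p k)]; the diagonal
   ones only matter for the [e j], and the block at [ord0] is free. *)
Definition implementing_element : M :=
  corner_sum p (fun r s =>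
    if r == s then (if r == ord0 then 0 else - (adjmx (e r) * Delta (e r)))
    else (mu s - mu r)^-1 *: Delta (\sum_k mu k *: p k)).
Local Notation w := implementing_element.

Let w_corner r s : r != s ->
  p r * w * p s =
  (mu s - mu r)^-1 *: (p r * Delta (\sum_k mu k *: p k) * p s).
Proof. by move=> rs; rewrite corner_sumE // (negbTE rs) -scalerAr -scalerAl. Qed.

Lemma Delta_comb_commr (lam : 'I_n.+1 -> C) :
  Delta (\sum_k lam k *: p k) = commr w (\sum_k lam k *: p k).
Proof.
apply: (eq_corners pp po p_neq0) => r s.
rewrite commr_sandwich orth_comb_mul_idem // orth_idem_mul_comb //.
rewrite -scalerAr -scalerAl mulrA -scalerBl.
case: (eqVneq r s) => [<-|rs].
  by rewrite subrr scale0r (weak_2_local_comb_diag_corner W pp po).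
by rewrite (weak_2_local_comb_corner W pp po _ (mu_neq rs)) w_corner // scalerA.
Qed.

Let Delta_proj_corner k r s : r != s ->
  p r * Delta (p k) * p s =
  (((s == k)%:R - (r == k)%:R) / (mu s - mu r)) *:
    (p r * Delta (\sum_l mu l *: p l) * p s).
Proof.
move=> rs; have pk : \sum_l (l == k)%:R *: p l = p k.
  rewrite (bigD1 k) //= eqxx scale1r big1 ?addr0 // => l /negbTE ->.
  by rewrite scale0r.
by rewrite -{1}pk (weak_2_local_comb_corner W pp po _ (mu_neq rs)).
Qed.

Lemma Delta_isometry_commr j : j != ord0 -> Delta (e j) = commr w (e j).
Proof.
move=> j0; have j0' : ord0 != j by rewrite eq_sym.
have proj k : is_projection (p k) by [].
have pie : p ord0 * e j = e j :=
  partial_isometry_range (proj _) (pp _) (ee j0) (ee' j0).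
have epj : e j * p j = e j :=
  partial_isometry_source (proj _) (proj _) (ee j0) (ee' j0).
have corner0 := weak_2_local_isometry_corner0 W pp po adjp (ee j0) (ee' j0).
have corner_range :=
  weak_2_local_isometry_corner_range W pp po adjp j0' (ee j0) (ee' j0).
have corner_source :=
  weak_2_local_isometry_corner_source W pp po adjp j0' (ee j0) (ee' j0).
have e_mul s : e j * p s = if s == j then e j else 0.
  by rewrite -{1}epj -mulrA orth_idem_mul // eq_sym; case: eqVneq; rewrite ?mulr0.
have mul_e r : p r * e j = if r == ord0 then e j else 0.
  by rewrite -{1}pie mulrA orth_idem_mul //; case: eqVneq => [->|_]; rewrite ?mul0r.
have w_e r : p r * w * e j = p r * w * p ord0 * e j by rewrite -{1}pie !mulrA.
have e_w s : e j * (w * p s) = e j * (p j * w * p s) by rewrite -{1}epj !mulrA.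
apply: (eq_corners pp po p_neq0) => r s; rewrite commr_sandwich e_mul mul_e.
case: (eqVneq r ord0) => [->|r0]; case: (eqVneq s j) => [->|sj].
- rewrite w_e e_w !corner_sumE // !eqxx (negbTE j0) mulr0 !mul0r sub0r.
  by rewrite !(mulrN, mulNr) !mulrA epj (ee' j0) opprK.
- rewrite mulr0 sub0r corner_range // e_w w_corner 1?eq_sym //.
  rewrite Delta_proj_corner 1?eq_sym // (eq_sym j) (negbTE sj) eqxx.
  by rewrite mulr0n mulr1n sub0r mulNr mul1r scaleNr mulrN.
- rewrite mul0r subr0 corner_source // w_e w_corner // Delta_proj_corner //.
  by rewrite eqxx (negbTE r0) mulr1n mulr0n subr0 mul1r.
- by rewrite mulr0 mul0r subr0 corner0.
Qed.

End ImplementingElement.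

Theorem proposition2p10 (R : realType) (m : nat)
    (Delta : 'M[R[i]]_m.+1 -> 'M[R[i]]_m.+1)
    (p : 'I_m.+1 -> 'M[R[i]]_m.+1)
    (e : 'I_m.+1 -> 'I_m.+1 -> 'M[R[i]]_m.+1) :
  weak_2_local_derivation Delta ->
  (forall k, minimal_projection (p k)) ->
  (forall k l, k != l -> p k * p l = 0) ->
  (forall k l, adjmx (e k l) * e k l = p l /\ e k l * adjmx (e k l) = p k) ->
  exists w0 : 'M[R[i]]_m.+1,
    (forall lambda : 'I_m.+1 -> R[i],
       Delta (\sum_k lambda k *: p k) = commr w0 (\sum_k lambda k *: p k)) /\
    (forall j : 'I_m.+1, j != ord0 -> Delta (e ord0 j) = commr w0 (e ord0 j)).
Proof.
move=> W minp po He.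
have pp k : p k * p k = p k by case: (minp k) => [[_ ->]].
have adjp k : adjmx (p k) = p k by case: (minp k) => [[-> _]].
have p_neq0 k : p k != 0 by case: (minp k) => [_ [-> _]].
exists (implementing_element Delta p (e ord0)); split.
  exact: Delta_comb_commr.
by move=> j j0; apply: Delta_isometry_commr => // k _; have [] := He ord0 k.
Qed.
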